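(* Let $\Re$ be a commutative Krasner hyperring with identity $1\ne0$, $\phi:L(\Re)\to L(\Re)\cup\{\emptyset\}$ a function, and $T$ a proper $\phi$-primary hyperideal of $\Re$. If $T$ is not primary, then $T^2\subseteq\phi(T)$. Equivalently, if $T^2\not\subseteq\phi(T)$ then $T$ is primary.
   Context: Krasner hyperring: $(\Re,\oplus)$ canonical hypergroup, $(\Re,\circ)$ commutative semigroup with identity $1\ne0$, $0$ absorbing, distributive. Hyperideals and $L(\Re)$ as usual; $T^2$ is the hyperideal generated by $\{a\circ b:a,b\in T\}$. $T$ is primary if $a\circ b\in T$ implies $a\in T$ or $b^k\in T$ for some $k\in\mathbb{N}$; $T$ is $\phi$-primary if $a\circ b\in T$, $a\circ b\notin\phi(T)$ imply $a\in T$ or $b^k\in T$ for some $k\in\mathbb{N}$. *)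

Set Implicit Arguments.

Record KrasnerHyperring := {
  carrier :> Type;
  hadd : carrier -> carrier -> carrier -> Prop;  (* hadd a b x  <->  x \in a (+) b *)
  hzero : carrier;
  hneg : carrier -> carrier;
  hmul : carrier -> carrier -> carrier;
  hone : carrier;
  hadd_nonempty : forall a b, exists x, hadd a b x;
  hadd_assoc : forall a b c x,
      (exists y, hadd a b y /\ hadd y c x) <-> (exists y, hadd b c y /\ hadd a y x);
  hadd_comm : forall a b x, hadd a b x <-> hadd b a x;
  hadd_zero : forall a x, hadd a hzero x <-> x = a;
  hneg_spec : forall a, hadd a (hneg a) hzero;
  hneg_unique : forall a b, hadd a b hzero -> b = hneg a;
  hadd_rev : forall a b c, hadd a b c -> hadd (hneg a) c b;
  hmul_assoc : forall a b c, hmul a (hmul b c) = hmul (hmul a b) c;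
  hmul_comm : forall a b, hmul a b = hmul b a;
  hmul_one : forall a, hmul hone a = a;
  hone_neq_zero : hone <> hzero;
  hmul_zero : forall a, hmul hzero a = hzero;
  hmul_distr : forall a b c x,
      (exists y, hadd b c y /\ x = hmul a y) <-> hadd (hmul a b) (hmul a c) x
}.

Arguments hadd {k}. Arguments hzero {k}. Arguments hneg {k}.
Arguments hmul {k}. Arguments hone {k}.

Section Ideals.
Variable R : KrasnerHyperring.

Definition subset (A B : R -> Prop) : Prop := forall x, A x -> B x.

Definition hyperideal (I : R -> Prop) : Prop :=
  (exists x, I x) /\
  (forall a b x, I a -> I b -> hadd a (hneg b) x -> I x) /\
  (forall r a, I a -> I (hmul r a)).

Definition proper (I : R -> Prop) : Prop := exists x, ~ I x.

Fixpoint hpow (b : R) (k : nat) : R :=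
  match k with 0 => hone | S k' => hmul b (hpow b k') end.

Definition gen_hyperideal (S : R -> Prop) : R -> Prop :=
  fun x => forall J, hyperideal J -> subset S J -> J x.

Definition hsq (T : R -> Prop) : R -> Prop :=
  gen_hyperideal (fun x => exists a b, T a /\ T b /\ x = hmul a b).

Definition primary (T : R -> Prop) : Prop :=
  forall a b, T (hmul a b) -> T a \/ exists k, 1 <= k /\ T (hpow b k).

Definition phi_primary (phi : (R -> Prop) -> (R -> Prop)) (T : R -> Prop) : Prop :=
  forall a b, T (hmul a b) -> ~ phi T (hmul a b) ->
    T a \/ exists k, 1 <= k /\ T (hpow b k).

End Ideals.

Arguments subset {R}. Arguments hyperideal {R}. Arguments proper {R}.
Arguments hpow {R}. Arguments gen_hyperideal {R}. Arguments hsq {R}.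
Arguments primary {R}. Arguments phi_primary {R}.

From Stdlib Require Import Classical.
Set Implicit Arguments.

(* Since T is not primary, there are a, b with a o b in T, a not in T and no
   power of b in T.  The same then holds for every w in a + T and z in b + T,
   so phi-primality forces w o z into phi T; in particular phi T is a
   hyperideal.  For x, y in T, expanding (a + x) o (b + y) by distributivity
   and cancelling the summands already known to lie in phi T leaves x o y in
   phi T. *)

Section Hyperideals.
Variable R : KrasnerHyperring.

Lemma hneg_involutive (p : R) : hneg (hneg p) = p.
Proof. symmetry; apply hneg_unique, hadd_comm, hneg_spec. Qed.

Lemma hmul_hadd (w : R) {p q u : R} : hadd p q u -> hadd (hmul w p) (hmul w q) (hmul w u).
Proof. intros Hu; apply hmul_distr; exists u; auto. Qed.

Definition in_coset (I : R -> Prop) (p q : R) : Prop := exists x, I x /\ hadd p x q.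

Lemma hsq_subset (T J : R -> Prop) :
  hyperideal J -> (forall x y, T x -> T y -> J (hmul x y)) -> subset (hsq T) J.
Proof.
  intros HJ Hmul u Hu; apply Hu; [exact HJ |].
  intros v (x & y & Hx & Hy & ->); auto.
Qed.

Section Cosets.
Variable I : R -> Prop.
Hypothesis HI : hyperideal I.

Lemma hyperideal_zero : I hzero.
Proof.
  destruct HI as [[x Hx] [Hsub _]]; exact (Hsub x x hzero Hx Hx (hneg_spec _ x)).
Qed.

Lemma hyperideal_neg {p : R} : I p -> I (hneg p).
Proof.
  intros Hp; destruct HI as [_ [Hsub _]].
  apply (Hsub hzero p); [exact hyperideal_zero | exact Hp |].
  apply hadd_comm, hadd_zero; reflexivity.
Qed.

Lemma hyperideal_add {p q u : R} : I p -> I q -> hadd p q u -> I u.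
Proof.
  intros Hp Hq Hu; destruct HI as [_ [Hsub _]].
  apply (Hsub p (hneg q)); [exact Hp | exact (hyperideal_neg Hq) |].
  rewrite hneg_involutive; exact Hu.
Qed.

Lemma hyperideal_cancel {p q u : R} : hadd p q u -> I p -> I u -> I q.
Proof.
  intros Hu Hp HIu; destruct HI as [_ [Hsub _]].
  apply (Hsub u p); [exact HIu | exact Hp |].
  apply hadd_comm, hadd_rev; exact Hu.
Qed.

Lemma hyperideal_mul (r : R) {p : R} : I p -> I (hmul r p).
Proof. destruct HI as [_ [_ Hmul]]; apply Hmul. Qed.

Lemma in_coset_refl (p : R) : in_coset I p p.
Proof. exists hzero; split; [exact hyperideal_zero | apply hadd_zero; reflexivity]. Qed.

Lemma in_coset_sym {p q : R} : in_coset I p q -> in_coset I q p.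
Proof.
  intros (x & Hx & Hq); exists (hneg x); split; [exact (hyperideal_neg Hx) |].
  apply hadd_comm, hadd_rev, hadd_comm; exact Hq.
Qed.

Lemma in_coset_trans {p q u : R} : in_coset I p q -> in_coset I q u -> in_coset I p u.
Proof.
  intros (x & Hx & Hq) (y & Hy & Hu).
  destruct (proj1 (hadd_assoc _ p x y u) (ex_intro _ q (conj Hq Hu))) as (v & Hv & Hpv).
  exists v; split; [exact (hyperideal_add Hx Hy Hv) | exact Hpv].
Qed.

Lemma in_coset_mul (w : R) {p q : R} : in_coset I p q -> in_coset I (hmul w p) (hmul w q).
Proof.
  intros (x & Hx & Hq); exists (hmul w x).
  split; [exact (hyperideal_mul w Hx) | exact (hmul_hadd w Hq)].
Qed.

Lemma in_coset_mem {p q : R} : in_coset I p q -> I p -> I q.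
Proof. intros (x & Hx & Hq) Hp; exact (hyperideal_add Hp Hx Hq). Qed.

Lemma in_coset_hpow {b z : R} (k : nat) : in_coset I b z -> in_coset I (hpow b k) (hpow z k).
Proof.
  intros Hz; induction k as [| k IHk]; simpl; [apply in_coset_refl |].
  apply (in_coset_trans (q := hmul z (hpow b k))); [| exact (in_coset_mul z IHk)].
  rewrite (hmul_comm _ b), (hmul_comm _ z); exact (in_coset_mul (hpow b k) Hz).
Qed.

Lemma in_coset_hmul {a b w z : R} :
  I (hmul a b) -> in_coset I a w -> in_coset I b z -> I (hmul w z).
Proof.
  intros Hab Hw Hz; apply (in_coset_mem (in_coset_mul w Hz)).
  rewrite (hmul_comm _ w); apply (in_coset_mem (in_coset_mul b Hw)).
  rewrite hmul_comm; exact Hab.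
Qed.

End Cosets.

Lemma not_primary_witness (T : R -> Prop) :
  ~ primary T ->
  exists a b, T (hmul a b) /\ ~ T a /\ forall k, 1 <= k -> ~ T (hpow b k).
Proof.
  intros HnotP; apply NNPP; intros Hno; apply HnotP; intros a b Hab.
  destruct (classic (T a)) as [Ha | Ha]; [now left | right].
  apply NNPP; intros Hb; apply Hno; exists a, b; repeat split; auto.
  intros k Hk HTk; apply Hb; exists k; auto.
Qed.

Lemma phi_primary_mem (phi : (R -> Prop) -> (R -> Prop)) (T : R -> Prop) (w z : R) :
  phi_primary phi T -> T (hmul w z) -> ~ T w -> (forall k, 1 <= k -> ~ T (hpow z k)) ->
  phi T (hmul w z).
Proof.
  intros HTphi Hwz Hw Hz; apply NNPP; intros Hphi.
  destruct (HTphi w z Hwz Hphi) as [HTw | (k & Hk & HTk)]; [exact (Hw HTw) | exact (Hz k Hk HTk)].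
Qed.

Section NotPrimary.
Variable phi : (R -> Prop) -> (R -> Prop).
Variable T : R -> Prop.
Variables a b : R.
Hypothesis HT : hyperideal T.
Hypothesis HTphi : phi_primary phi T.
Hypothesis Hab : T (hmul a b).
Hypothesis Ha : ~ T a.
Hypothesis Hb : forall k, 1 <= k -> ~ T (hpow b k).

Lemma coset_hmul_mem_phi (w z : R) : in_coset T a w -> in_coset T b z -> phi T (hmul w z).
Proof.
  intros Hw Hz; apply phi_primary_mem; [exact HTphi | exact (in_coset_hmul HT Hab Hw Hz) | |].
  - intros HTw; exact (Ha (in_coset_mem HT (in_coset_sym HT Hw) HTw)).
  - intros k Hk HTk; apply (Hb Hk).
    exact (in_coset_mem HT (in_coset_sym HT (in_coset_hpow HT k Hz)) HTk).
Qed.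

Hypothesis Hphi : hyperideal (phi T) \/ (forall x, ~ phi T x).

Lemma phi_hyperideal : hyperideal (phi T).
Proof.
  destruct Hphi as [H | Hempty]; [exact H |].
  destruct (Hempty _ (coset_hmul_mem_phi (in_coset_refl HT a) (in_coset_refl HT b))).
Qed.

Lemma coset_hmul_ideal_mem_phi (w y : R) : in_coset T a w -> T y -> phi T (hmul w y).
Proof.
  intros Hw Hy; destruct (hadd_nonempty _ b y) as [z Hz].
  apply (hyperideal_cancel phi_hyperideal (hmul_hadd w Hz)); apply coset_hmul_mem_phi; auto.
  - apply in_coset_refl; exact HT.
  - exists y; auto.
Qed.

Lemma hmul_ideal_mem_phi (x y : R) : T x -> T y -> phi T (hmul x y).
Proof.
  intros Hx Hy; destruct (hadd_nonempty _ a x) as [w Hw].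
  pose proof (hmul_hadd y Hw) as Hwy; rewrite !(hmul_comm _ y) in Hwy.
  apply (hyperideal_cancel phi_hyperideal Hwy); apply coset_hmul_ideal_mem_phi; auto.
  - apply in_coset_refl; exact HT.
  - exists x; auto.
Qed.

End NotPrimary.
End Hyperideals.

Theorem mainTheorem12 (R : KrasnerHyperring)
  (phi : (R -> Prop) -> (R -> Prop))
  (Hphi : forall I : R -> Prop, hyperideal I -> hyperideal (phi I) \/ (forall x, ~ phi I x))
  (T : R -> Prop) (HT : hyperideal T) (HTp : proper T)
  (HTphi : phi_primary phi T) (HnotP : ~ primary T) :
  subset (hsq T) (phi T).
Proof.
  destruct (not_primary_witness HnotP) as (a & b & Hab & Ha & Hb).
  apply hsq_subset.
  - exact (phi_hyperideal a b HT HTphi Hab Ha Hb (Hphi T HT)).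
  - exact (hmul_ideal_mem_phi a b HT HTphi Hab Ha Hb (Hphi T HT)).
Qed.
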